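(* Let $\mathcal{K}_i=(\mathcal{R}_i,\mathcal{T}_i)$, $i\in\{1,2\}$, be ME-consistent $\mathcal{ALCP}$ knowledge bases over the same language such that $\mathrm{Mod}(\mathcal{R}_1)=\mathrm{Mod}(\mathcal{R}_2)$ and $\mathrm{Mod}(\mathcal{T}_1)=\mathrm{Mod}(\mathcal{T}_2)$. Then for all concepts $C,D$ and contexts $\kappa\in\mathcal{L}$, $\mathcal{B}_{\mathcal{K}_1}(C\sqsubseteq D\mid\kappa)=\mathcal{B}_{\mathcal{K}_2}(C\sqsubseteq D\mid\kappa)$.
   Context: $\mathcal{L}$ is a propositional language over a finite set of variables; $\mathrm{Int}(\mathcal{L})$ is the set of truth assignments. A probability distribution over $\mathcal{L}$ is $P:\mathrm{Int}(\mathcal{L})\to[0,1]$ summing to $1$, with $P(\phi)=\sum_{v\models\phi}P(v)$. A probabilistic constraint is $c_0+\sum_{i=1}^k c_i\,\mathsf{p}(\phi_i)\ge 0$ ($c_i\in\mathbb{R}$, $\phi_i\in\mathcal{L}$), satisfied by $P$ iff $c_0+\sum_ic_iP(\phi_i)\ge0$; $\mathrm{Mod}(\mathcal{R})$ is the set of distributions satisfying all constraints in $\mathcal{R}$; for consistent $\mathcal{R}$, $P^{ME}_{\mathcal{R}}$ is the unique maximizer in $\mathrm{Mod}(\mathcal{R})$ of $H(P)=-\sum_vP(v)\log P(v)$. Concepts: $C::=A\mid\neg C\mid C\sqcap C\mid\exists r.C$. An $\mathcal{L}$-GCI is $\langle C\sqsubseteq D:\kappa\rangle$, $\kappa\in\mathcal{L}$;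 an $\mathcal{L}$-TBox is a finite set of them; a KB is $\mathcal{K}=(\mathcal{R},\mathcal{T})$. A possible world $\mathcal{I}=(\Delta^{\mathcal{I}},\cdot^{\mathcal{I}},v^{\mathcal{I}})$ is a classical $\mathcal{ALC}$ interpretation together with $v^{\mathcal{I}}\in\mathrm{Int}(\mathcal{L})$; it models $\langle C\sqsubseteq D:\kappa\rangle$ iff $v^{\mathcal{I}}\not\models\kappa$ or $C^{\mathcal{I}}\subseteq D^{\mathcal{I}}$; $\mathrm{Mod}(\mathcal{T})$ is the set of possible worlds modelling all GCIs of $\mathcal{T}$. An $\mathcal{ALCP}$-interpretation $\mathcal{P}=(\mathfrak{I},P_{\mathfrak{I}})$ is a nonempty finite set of possible worlds with a probability distribution on it; $P^{\mathcal{P}}(v)=\sum_{\mathcal{I}\in\mathfrak{I},v^{\mathcal{I}}=v}P_{\mathfrak{I}}(\mathcal{I})$. $\mathcal{P}$ is an ME-$\mathcal{ALCP}$-model of $\mathcal{K}$ iff $\mathfrak{I}\subseteq\mathrm{Mod}(\mathcal{T})$ and $P^{\mathcal{P}}=P^{ME}_{\mathcal{R}}$; $\mathrm{Mod}_{ME}(\mathcal{K})$ is the set of these; $\mathcal{K}$ is ME-consistent iff it is nonempty. $\Pr_{\mathcal{P}}(C\sqsubseteq D\mid\kappa)=\big(\sum_{\mathcal{I}\in\mathfrak{I},v^{\mathcal{I}}\models\kappa,C^{\mathcal{I}}\subseteq D^{\mathcal{I}}}P_{\mathfrak{I}}(\mathcal{I})\big)/\big(\sum_{\mathcal{I}\in\mathfrak{I},v^{\mathcal{I}}\models\kappa}P_{\mathfrak{I}}(\mathcal{I})\big)$.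 The belief interval is $\mathcal{B}_{\mathcal{K}}(C\sqsubseteq D\mid\kappa)=[\mathcal{B}^{s}_{\mathcal{K}}(C\sqsubseteq D\mid\kappa),\mathcal{B}^{c}_{\mathcal{K}}(C\sqsubseteq D\mid\kappa)]$, where $\mathcal{B}^{s}_{\mathcal{K}}$ and $\mathcal{B}^{c}_{\mathcal{K}}$ are the infimum and supremum of $\Pr_{\mathcal{P}}(C\sqsubseteq D\mid\kappa)$ over $\mathcal{P}\in\mathrm{Mod}_{ME}(\mathcal{K})$. *)

From Stdlib Require List.
From mathcomp Require Import all_boot all_order all_algebra.
From mathcomp Require Import boolp classical_sets reals exp.
Set Implicit Arguments. Unset Strict Implicit. Unset Printing Implicit Defensive.
Import Order.TTheory GRing.Theory Num.Theory.
Local Open Scope ring_scope.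

Inductive pform (V : Type) : Type :=
| FVar : V -> pform V
| FTop : pform V
| FBot : pform V
| FNot : pform V -> pform V
| FAnd : pform V -> pform V -> pform V
| FOr  : pform V -> pform V -> pform V
| FImp : pform V -> pform V -> pform V.

Definition interp (V : finType) := {ffun V -> bool}.

Fixpoint fsat (V : finType) (v : interp V) (phi : pform V) : bool :=
  match phi with
  | FVar x => v x
  | FTop => true
  | FBot => false
  | FNot p => ~~ fsat v p
  | FAnd p q => fsat v p && fsat v q
  | FOr p q => fsat v p || fsat v q
  | FImp p q => fsat v p ==> fsat v q
  end.

Section Prob.
Variables (R : realType) (V : finType).

Definition is_dist (P : interp V -> R) : Prop :=
  (forall v, 0 <= P v) /\ \sum_(v : interp V) P v = 1.

Definition probf (P : interp V -> R) (phi : pform V) : R :=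
  \sum_(v : interp V | fsat v phi) P v.

Record pconstr := PConstr { pc_c0 : R ; pc_terms : seq (R * pform V) }.

Definition sat_constr (P : interp V -> R) (c : pconstr) : Prop :=
  0 <= pc_c0 c + \sum_(t <- pc_terms c) t.1 * probf P t.2.

Definition ModR (Rs : seq pconstr) (P : interp V -> R) : Prop :=
  is_dist P /\ forall c, Stdlib.Lists.List.In c Rs -> sat_constr P c.

Definition entropy (P : interp V -> R) : R :=
  - \sum_(v : interp V) (if P v == 0 then 0 else P v * ln (P v)).

(** [P] is the (unique) ME-distribution P^ME_R of [Rs]. *)
Definition is_ME (Rs : seq pconstr) (P : interp V -> R) : Prop :=
  ModR Rs P /\ forall Q, ModR Rs Q -> entropy Q <= entropy P.

End Prob.

Inductive concept (NC NR : Type) : Type :=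
| CAtom : NC -> concept NC NR
| CNot  : concept NC NR -> concept NC NR
| CAnd  : concept NC NR -> concept NC NR -> concept NC NR
| CEx   : NR -> concept NC NR -> concept NC NR.

Record gci (V : finType) (NC NR : Type) := GCI
  { gci_lhs : concept NC NR ; gci_rhs : concept NC NR ; gci_ctx : pform V }.

Record world (V : finType) (NC NR : Type) := World
  { dom : Type ;
    dom_ne : inhabited dom ;
    iconc : NC -> dom -> Prop ;
    irole : NR -> dom -> dom -> Prop ;
    wval : interp V }.

Fixpoint cext (V : finType) (NC NR : Type) (w : world V NC NR)
  (C : concept NC NR) : dom w -> Prop :=
  match C with
  | CAtom A => @iconc _ _ _ w A
  | CNot C' => fun x => ~ @cext V NC NR w C' x
  | CAnd C1 C2 => fun x => @cext V NC NR w C1 x /\ @cext V NC NR w C2 x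
  | CEx r C' => fun x => exists y, @irole _ _ _ w r x y /\ @cext V NC NR w C' y
  end.
Arguments cext {V NC NR} w C.

Definition subsumes (V : finType) (NC NR : Type) (w : world V NC NR)
  (C D : concept NC NR) : Prop :=
  forall x, cext w C x -> cext w D x.

Definition world_models_gci (V : finType) (NC NR : Type) (w : world V NC NR)
  (g : gci V NC NR) : Prop :=
  ~~ fsat (wval w) (gci_ctx g) \/ subsumes w (gci_lhs g) (gci_rhs g).

Definition ModT (V : finType) (NC NR : Type) (T : seq (gci V NC NR))
  (w : world V NC NR) : Prop :=
  forall g, Stdlib.Lists.List.In g T -> world_models_gci w g.

Record kb (R : realType) (V : finType) (NC NR : Type) := KB
  { kb_R : seq (pconstr R V) ; kb_T : seq (gci V NC NR) }.

Record alcp_interp (R : realType) (V : finType) (NC NR : Type) := ALCPI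
  { idx : finType ;
    idx_ne : (0 < #|idx|)%N ;
    pw : idx -> world V NC NR ;
    pprob : idx -> R ;
    pprob_ge0 : forall i, 0 <= pprob i ;
    pprob_sum1 : \sum_(i : idx) pprob i = 1 }.
Arguments pw {R V NC NR} a i.
Arguments pprob {R V NC NR} a i.

Definition induced_dist (R : realType) (V : finType) (NC NR : Type)
  (P : alcp_interp R V NC NR) (v : interp V) : R :=
  \sum_(i : idx P | wval (pw P i) == v) pprob P i.

Definition ME_model (R : realType) (V : finType) (NC NR : Type)
  (K : kb R V NC NR) (P : alcp_interp R V NC NR) : Prop :=
  (forall i, ModT (kb_T K) (pw P i)) /\ is_ME (kb_R K) (induced_dist P).

Definition ME_consistent (R : realType) (V : finType) (NC NR : Type)
  (K : kb R V NC NR) : Prop := exists P, ME_model K P.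

(** Pr_P(C ⊑ D | kappa)  (with the mathcomp convention x / 0 = 0). *)
Definition PrCond (R : realType) (V : finType) (NC NR : Type)
  (P : alcp_interp R V NC NR) (C D : concept NC NR) (kappa : pform V) : R :=
  (\sum_(i : idx P | fsat (wval (pw P i)) kappa && `[< subsumes (pw P i) C D >])
      pprob P i)
  / (\sum_(i : idx P | fsat (wval (pw P i)) kappa) pprob P i).

Definition belief_values (R : realType) (V : finType) (NC NR : Type)
  (K : kb R V NC NR) (C D : concept NC NR) (kappa : pform V) : set R :=
  [set r | exists P, ME_model K P /\ r = PrCond P C D kappa].

Definition belief_interval (R : realType) (V : finType) (NC NR : Type)
  (K : kb R V NC NR) (C D : concept NC NR) (kappa : pform V) : R * R :=
  (inf (belief_values K C D kappa), sup (belief_values K C D kappa)).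

From mathcomp Require Import all_boot all_order all_algebra.
From mathcomp Require Import boolp classical_sets reals exp.

(* The belief interval is computed from the set of ME-models alone, and whether
   an ALCP-interpretation is an ME-model depends on R and T only through
   Mod(R) (which determines P^ME_R) and Mod(T). *)

Set Implicit Arguments. Unset Strict Implicit. Unset Printing Implicit Defensive.

Lemma is_ME_ModR_eq (R : realType) (V : finType) (Rs1 Rs2 : seq (pconstr R V)) :
  (forall P, ModR Rs1 P <-> ModR Rs2 P) ->
  forall P, is_ME Rs1 P -> is_ME Rs2 P.
Proof.
move=> eqR P [modP maxP]; split; first exact/eqR.
by move=> Q /eqR; apply: maxP.
Qed.

Lemma ME_model_Mod_eq (R : realType) (V : finType) (NC NR : Type)
    (K1 K2 : kb R V NC NR) :
  (forall P, ModR (kb_R K1) P <-> ModR (kb_R K2) P) ->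
  (forall w, ModT (kb_T K1) w <-> ModT (kb_T K2) w) ->
  forall P, ME_model K1 P -> ME_model K2 P.
Proof.
move=> eqR eqT P [modT ME1]; split; first by move=> i; apply/eqT.
exact: is_ME_ModR_eq ME1.
Qed.

Lemma belief_values_Mod_eq (R : realType) (V : finType) (NC NR : Type)
    (K1 K2 : kb R V NC NR) :
  (forall P, ModR (kb_R K1) P <-> ModR (kb_R K2) P) ->
  (forall w, ModT (kb_T K1) w <-> ModT (kb_T K2) w) ->
  forall C D kappa, belief_values K1 C D kappa = belief_values K2 C D kappa.
Proof.
move=> eqR eqT C D kappa; apply/seteqP; split=> r [P [modelP ->]];
  exists P; split=> //; apply: ME_model_Mod_eq modelP => // x; exact: iff_sym.
Qed.

Theorem theorem6 (R : realType) (V : finType) (NC NR : Type)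
  (K1 K2 : kb R V NC NR) :
  ME_consistent K1 -> ME_consistent K2 ->
  (forall P : interp V -> R, ModR (kb_R K1) P <-> ModR (kb_R K2) P) ->
  (forall w : world V NC NR, ModT (kb_T K1) w <-> ModT (kb_T K2) w) ->
  forall (C D : concept NC NR) (kappa : pform V),
    belief_interval K1 C D kappa = belief_interval K2 C D kappa.
Proof.
move=> _ _ eqR eqT C D kappa.
by rewrite /belief_interval (belief_values_Mod_eq eqR eqT).
Qed.
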